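(* Let $\mathcal V\subseteq B(H)$ be an operator system and suppose $p\in\mathcal V$ is a projection in $B(H)$. Then $\{C(p_n)\}_n$ is a (not necessarily proper) matrix ordering on $\mathcal V$. Furthermore, if $q\in\mathcal V$ satisfies $p\le q\le I$, then $q$ is an Archimedean matrix order unit for $(\mathcal V,\{C(p_n)\}_n)$.
   Context: $p_n=I_n\otimes p$ and $C(p_n)=\{x\in M_n(\mathcal V): x=x^*,\ p_nxp_n\ge0\text{ in }B(H^n)\}$. A (not necessarily proper) matrix ordering is a sequence of cones $D_n\subseteq M_n(\mathcal V)_h$ with $\alpha^*D_n\alpha\subseteq D_m$ for all $\alpha\in M_{n,m}$. An element $u$ is an Archimedean matrix order unit for $\{D_n\}$ if for every hermitian $x\in M_n(\mathcal V)$ there is $r>0$ with $ru_n-x\in D_n$ ($u_n=I_n\otimes u$), and $x+\epsilon u_n\in D_n$ for all $\epsilon>0$ implies $x\in D_n$. *)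

From mathcomp Require Import all_boot all_order all_algebra.
From mathcomp Require Import reals.
From mathcomp.real_closed Require Import complex.
Set Implicit Arguments. Unset Strict Implicit. Unset Printing Implicit Defensive.
Import Order.TTheory GRing.Theory Num.Theory.
Local Open Scope ring_scope.
Local Open Scope complex_scope.

Section Defs.
Variable R : realType.
Local Notation C := R[i].

Record hilbert (H : lmodType C) := Hilbert {
  ip : H -> H -> C;
  ip_linl : forall (a : C) (x y z : H), ip (a *: x + y) z = a * ip x z + ip y z;
  ip_conj : forall x y : H, ip y x = (ip x y)^*;
  ip_ge0 : forall x : H, 0 <= ip x x;
  ip_eq0 : forall x : H, ip x x = 0 -> x = 0;
  ip_complete : forall u : nat -> H,
    (forall eps : R, 0 < eps -> exists N : nat, forall m n : nat,
        (N <= m)%N -> (N <= n)%N -> ip (u m - u n) (u m - u n) < eps%:C) ->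
    exists l : H, forall eps : R, 0 < eps -> exists N : nat, forall n : nat,
        (N <= n)%N -> ip (u n - l) (u n - l) < eps%:C
}.

Variables (H : lmodType C) (Hs : hilbert H).

(* (not necessarily bounded) maps H -> H; elements of B(H) are the
   bounded linear ones *)
Definition op := H -> H.

Definition is_linear_op (T : op) :=
  forall (a : C) (x y : H), T (a *: x + y) = a *: T x + T y.

Definition is_bounded_op (T : op) :=
  exists M : R, forall x : H, ip Hs (T x) (T x) <= M%:C * ip Hs x x.

Definition in_BH (T : op) := is_linear_op T /\ is_bounded_op T.

Definition is_adj (T S : op) := forall x y : H, ip Hs (T x) y = ip Hs x (S y).

Definition op_id : op := fun x => x.
Definition op_add (T S : op) : op := fun x => T x + S x.
Definition op_scale (a : C) (T : op) : op := fun x => a *: T x.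

Definition op_pos (T : op) := forall x : H, 0 <= ip Hs (T x) x.
Definition op_le (T S : op) := op_pos (op_add S (op_scale (-1) T)).

Definition operator_system (V : op -> Prop) :=
  [/\ forall T, V T -> in_BH T,
      V op_id,
      forall T S, V T -> V S -> V (op_add T S),
      forall (a : C) T, V T -> V (op_scale a T)
    & forall T, V T -> exists2 S, V S & is_adj T S].

Definition projection (p : op) :=
  [/\ in_BH p, forall x, p (p x) = p x & is_adj p p].

(* n x n matrices of operators, acting on H^n *)
Definition opmx (n : nat) := 'I_n -> 'I_n -> op.

Definition in_Mn (V : op -> Prop) n (X : opmx n) := forall i j, V (X i j).

Definition hermitian n (X : opmx n) := forall i j, is_adj (X i j) (X j i).

Definition mx_add n (X Y : opmx n) : opmx n := fun i j => op_add (X i j) (Y i j).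
Definition mx_scale n (a : C) (X : opmx n) : opmx n := fun i j => op_scale a (X i j).

Definition ampl (u : op) n : opmx n :=
  fun i j => if i == j then u else (fun _ => 0).
Arguments ampl : clear implicits.

(* alpha^* X alpha, for alpha in M_{n,m}(C) *)
Definition congr_mx n m (alpha : 'M[C]_(n, m)) (X : opmx n) : opmx m :=
  fun k l x => \sum_(i < n) \sum_(j < n) (((alpha i k)^* * alpha j l) *: X i j x).

(* positivity of X as an operator on H^n *)
Definition mx_pos n (X : opmx n) :=
  forall v : 'I_n -> H, 0 <= \sum_(i < n) ip Hs (\sum_(j < n) X i j (v j)) (v i).

(* C(p_n) = { x in M_n(V) : x = x^*, p_n x p_n >= 0 in B(H^n) } *)
Definition Cp (V : op -> Prop) (p : op) n (X : opmx n) :=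
  [/\ in_Mn V X, hermitian X & mx_pos (fun i j x => p (X i j (p x)))].

Definition is_cone n (D : opmx n -> Prop) :=
  (forall X Y, D X -> D Y -> D (mx_add X Y)) /\
  (forall (t : R) X, 0 <= t -> D X -> D (mx_scale t%:C X)).

Definition matrix_ordering (V : op -> Prop) (D : forall n, opmx n -> Prop) :=
  [/\ forall n X, D n X -> in_Mn V X /\ hermitian X,
      forall n, is_cone (D n)
    & forall n m (alpha : 'M[C]_(n, m)) X, D n X -> D m (congr_mx alpha X)].

Definition archimedean_unit (V : op -> Prop) (D : forall n, opmx n -> Prop) (u : op) :=
  (forall n (X : opmx n), in_Mn V X -> hermitian X ->
     exists2 r : R, 0 < r & D n (mx_add (mx_scale r%:C (ampl u n)) (mx_scale (-1) X))) /\
  (forall n (X : opmx n), in_Mn V X -> hermitian X ->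
     (forall eps : R, 0 < eps -> D n (mx_add X (mx_scale eps%:C (ampl u n)))) -> D n X).

End Defs.

From Pilot Require Import Defs.
From mathcomp Require Import all_boot all_order all_algebra.
From mathcomp Require Import reals.
From mathcomp.real_closed Require Import complex.
From mathcomp Require Import ring lra.
From Stdlib Require Import FunctionalExtensionality.
Set Implicit Arguments. Unset Strict Implicit. Unset Printing Implicit Defensive.
Import Order.TTheory GRing.Theory Num.Theory.
Local Open Scope ring_scope.
Local Open Scope complex_scope.

(* The positivity condition defining C(p_n) sees X only through the compressed
   form mx_form X (p o v) = sum_(i,j) <X_ij (p v_j), p v_i>.  This form is additive
   and positively homogeneous in X, and alpha^* X alpha merely replaces v by alpha v
   (which commutes with p), so the C(p_n) form a matrix ordering.
   If p <= q then <q (p x), p x> >= |p x|^2, whereas for a hermitian X with bounded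
   entries the compressed form is at most a constant times sum_i |p v_i|^2; hence a
   large multiple of q_n dominates X, and letting eps -> 0 in
   mx_form X + eps mx_form q_n >= 0 gives the Archimedean property.  That q_n is
   hermitian comes from q - p >= 0: positive operators on a complex Hilbert space
   are self-adjoint. *)

Lemma ge0_conjc (R : rcfType) (z : R[i]) : 0 <= z -> z^* = z.
Proof. by move=> /ger0_real /complex_realP [k ->]; exact: conjc_real. Qed.

Lemma conjc_i_neq (R : rcfType) : 'i^* != 'i :> R[i].
Proof. by rewrite eq_complex /= eqxx lt_eqF // -subr_gt0 opprK addr_gt0. Qed.

Lemma ge0_of_forall_addZ (R : rcfType) (a b : R[i]) :
  0 <= b -> (forall e : R, 0 < e -> 0 <= a + e%:C * b) -> 0 <= a.
Proof.
move=> b_ge0 ab_ge0.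
have := ab_ge0 1 ltr01; rewrite rmorph1 mul1r => ab1_ge0.
have a_real : a \is Num.real by rewrite -[a](addrK b) rpredB ?ger0_real.
have [[α aE] [β bE]] := (complex_realP _ a_real, complex_realP _ (ger0_real b_ge0)).
move: b_ge0 ab_ge0; rewrite aE bE ler0c => β_ge0 ab_ge0.
have h e : 0 < e -> 0 <= α + e * β.
  by move=> /ab_ge0; rewrite -ler0c rmorphD rmorphM.
rewrite ler0c; case: (lerP 0 α) => // α_lt0.
(* For this e, α + e β = α / (β + 1) < 0. *)
pose e := - α / (β + 1).
have β1_gt0 : 0 < β + 1 by rewrite ltr_wpDl.
have e_gt0 : 0 < e by rewrite divr_gt0 // oppr_gt0.
have eE : e * β + e = - α by rewrite -[X in _ + X]mulr1 -mulrDr divfK // gt_eqF.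
have := h e e_gt0; lra.
Qed.

Lemma uniform_bound (R : realDomainType) (I : finType) (P : I -> R -> Prop) :
  (forall i M M', P i M -> M <= M' -> P i M') -> (forall i, exists M, P i M) ->
  exists2 K, 0 <= K & forall i, P i K.
Proof.
move=> P_mono P_ex.
suff [K K_ge0 PK] : exists2 K, 0 <= K & forall i, i \in enum I -> P i K.
  by exists K => // i; apply: PK; rewrite mem_enum.
elim: (enum I) => [|a s [K K_ge0 PK]]; first by exists 0.
have [M PaM] := P_ex a.
exists (Num.max M K) => [|i]; first by rewrite le_max K_ge0 orbT.
rewrite inE => /predU1P[-> | i_s].
  by apply: P_mono PaM _; rewrite le_max lexx.
by apply: P_mono (PK i i_s) _; rewrite le_max lexx orbT.
Qed.

Section InnerProduct.
Variables (R : realType) (H : lmodType R[i]) (Hs : hilbert H).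
Local Notation ip := (ip Hs).

Lemma ipDl x y z : ip (x + y) z = ip x z + ip y z.
Proof. by have := ip_linl Hs 1 x y z; rewrite scale1r mul1r. Qed.

Lemma ip0l y : ip 0 y = 0.
Proof. by apply: (@addrI _ (ip 0 y)); rewrite -ipDl !addr0. Qed.

Lemma ipZl a x z : ip (a *: x) z = a * ip x z.
Proof. by have := ip_linl Hs a x 0 z; rewrite !addr0 ip0l addr0. Qed.

Lemma ipNl x y : ip (- x) y = - ip x y.
Proof. by rewrite -scaleN1r ipZl mulN1r. Qed.

Lemma ip_suml (I : Type) (r : seq I) (P : pred I) (F : I -> H) y :
  ip (\sum_(i <- r | P i) F i) y = \sum_(i <- r | P i) ip (F i) y.
Proof. exact: (big_morph (ip^~ y) (fun a b => ipDl a b y) (ip0l y)). Qed.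

Lemma ipDr x y z : ip x (y + z) = ip x y + ip x z.
Proof. by rewrite ip_conj ipDl rmorphD /= -!ip_conj. Qed.

Lemma ip0r y : ip y 0 = 0.
Proof. by rewrite ip_conj ip0l conjc0. Qed.

Lemma ipZr a x z : ip x (a *: z) = a^*%C * ip x z.
Proof. by rewrite ip_conj ipZl rmorphM /= -ip_conj. Qed.

Lemma ipNr x y : ip x (- y) = - ip x y.
Proof. by rewrite -scaleN1r ipZr rmorphN1 mulN1r. Qed.

Lemma ip_sumr (I : Type) (r : seq I) (P : pred I) (F : I -> H) y :
  ip y (\sum_(i <- r | P i) F i) = \sum_(i <- r | P i) ip y (F i).
Proof. exact: (big_morph (ip y) (ipDr y) (ip0r y)). Qed.

Lemma ip_cross_le x y : ip x y + ip y x <= ip x x + ip y y.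
Proof.
have e : ip (x - y) (x - y) = ip x x + ip y y - (ip x y + ip y x).
  by rewrite ipDl !ipDr !ipNl !ipNr; ring.
by rewrite -subr_ge0 -e ip_ge0.
Qed.

End InnerProduct.

Section Operators.
Variables (R : realType) (H : lmodType R[i]) (Hs : hilbert H).
Local Notation ip := (ip Hs).

Section LinearOperator.
Variables (T : op H) (linT : is_linear_op T).

Lemma linD x y : T (x + y) = T x + T y.
Proof. by have := linT 1 x y; rewrite !scale1r. Qed.

Lemma lin0 : T 0 = 0.
Proof. by apply: (@addrI _ (T 0)); rewrite -linD !addr0. Qed.

Lemma linZ a x : T (a *: x) = a *: T x.
Proof. by have := linT a x 0; rewrite !addr0 lin0 addr0. Qed.

Lemma lin_sum (I : Type) (r : seq I) (P : pred I) (F : I -> H) :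
  T (\sum_(i <- r | P i) F i) = \sum_(i <- r | P i) T (F i).
Proof. exact: (big_morph T linD lin0). Qed.

End LinearOperator.

Lemma op_add_linear (T S : op H) :
  is_linear_op T -> is_linear_op S -> is_linear_op (op_add T S).
Proof. by move=> linT linS a x y; rewrite /op_add linT linS scalerDr addrACA. Qed.

Lemma op_scale_linear a (T : op H) : is_linear_op T -> is_linear_op (op_scale a T).
Proof. by move=> linT b x y; rewrite /op_scale linT scalerDr !scalerA mulrC. Qed.

Lemma adj_add (T S T' S' : op H) :
  is_adj Hs T S -> is_adj Hs T' S' -> is_adj Hs (op_add T T') (op_add S S').
Proof. by move=> adjT adjT' x y; rewrite /op_add ipDl ipDr adjT adjT'. Qed.

Lemma adj_scale a (T S : op H) :
  a^* = a -> is_adj Hs T S -> is_adj Hs (op_scale a T) (op_scale a S).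
Proof. by move=> a_real adjT x y; rewrite /op_scale ipZl ipZr a_real adjT. Qed.

Lemma adj_ampl (q : op H) n i j :
  is_adj Hs q q -> is_adj Hs (@ampl _ _ q n i j) (@ampl _ _ q n j i).
Proof.
by move=> adjq; rewrite /ampl eq_sym; case: eqP => // _ x y; rewrite ip0l ip0r.
Qed.

Lemma op_pos_adj (T : op H) : is_linear_op T -> op_pos Hs T -> is_adj Hs T T.
Proof.
move=> linT posT.
(* f is sesquilinear and vanishes on the diagonal; polarizing along y and 'i y kills it. *)
pose f x y := ip (T x) y - ip x (T y).
have f_diag x : f x x = 0 by rewrite /f [ip x _]ip_conj (ge0_conjc (posT x)) subrr.
have f_skew x y : f x y + f y x = 0.
  have -> : f x y + f y x = f (x + y) (x + y) - f x x - f y y.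
    by rewrite /f linD // !ipDl !ipDr; ring.
  by rewrite !f_diag !subr0.
move=> x y; apply/eqP; rewrite -subr_eq0 -/(f x y).
have f_yx : f y x = - f x y by apply/eqP; rewrite -addr_eq0 addrC f_skew.
have : ('i^*%C - 'i) * f x y = 0.
  rewrite -(f_skew x ('i *: y)) mulrBl -mulrN -f_yx /f !linZ // !ipZl !ipZr; ring.
by move/eqP; rewrite mulf_eq0 subr_eq0 (negbTE (conjc_i_neq R)).
Qed.

End Operators.

Section MatrixForm.
Variables (R : realType) (H : lmodType R[i]) (Hs : hilbert H).
Local Notation ip := (ip Hs).

Definition mx_form n (X : opmx H n) (w : 'I_n -> H) : R[i] :=
  \sum_(i < n) \sum_(j < n) ip (X i j (w j)) (w i).

Lemma mx_pos_compress (p : op H) n (X : opmx H n) : is_adj Hs p p ->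
  mx_pos Hs (fun i j x => p (X i j (p x))) <-> forall v, 0 <= mx_form X (p \o v).
Proof.
move=> adjp.
suff formE v :
    \sum_(i < n) ip (\sum_(j < n) p (X i j (p (v j)))) (v i) = mx_form X (p \o v).
  by split=> posX v; [rewrite -formE | rewrite formE].
by apply: eq_bigr => i _; rewrite ip_suml; apply: eq_bigr => j _; apply: adjp.
Qed.

Lemma mx_form_add n (X Y : opmx H n) w : mx_form (mx_add X Y) w = mx_form X w + mx_form Y w.
Proof.
rewrite /mx_form -big_split; apply: eq_bigr => i _.
by rewrite -big_split; apply: eq_bigr => j _; apply: ipDl.
Qed.

Lemma mx_form_scale n a (X : opmx H n) w : mx_form (mx_scale a X) w = a * mx_form X w.
Proof.
rewrite /mx_form mulr_sumr; apply: eq_bigr => i _.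
by rewrite mulr_sumr; apply: eq_bigr => j _; apply: ipZl.
Qed.

Lemma mx_form_ampl (q : op H) n w :
  mx_form (@ampl _ _ q n) w = \sum_(i < n) ip (q (w i)) (w i).
Proof.
apply: eq_bigr => i _; rewrite (bigD1 i) //= /ampl eqxx big1 ?addr0 // => j ji.
by rewrite eq_sym (negbTE ji) ip0l.
Qed.

Lemma mx_form_conj n (X : opmx H n) w :
  Defs.hermitian Hs X -> (mx_form X w)^* = mx_form X w.
Proof.
move=> hermX; rewrite /mx_form rmorph_sum exchange_big /=; apply: eq_bigr => j _.
by rewrite rmorph_sum; apply: eq_bigr => i _ /=; rewrite -ip_conj hermX.
Qed.

Lemma mx_form_congr n m (alpha : 'M[R[i]]_(n, m)) (X : opmx H n) w :
  (forall i j, is_linear_op (X i j)) ->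
  mx_form (congr_mx alpha X) w = mx_form X (fun i => \sum_(l < m) alpha i l *: w l).
Proof.
move=> linX; rewrite /mx_form /congr_mx /=.
pose F i j k l := (alpha i k)^*%C * alpha j l * ip (X i j (w l)) (w k).
transitivity (\sum_(k < m) \sum_(l < m) \sum_(i < n) \sum_(j < n) F i j k l).
  apply: eq_bigr => k _; apply: eq_bigr => l _; rewrite ip_suml.
  by apply: eq_bigr => i _; rewrite ip_suml; apply: eq_bigr => j _; rewrite ipZl.
transitivity (\sum_(i < n) \sum_(j < n) \sum_(k < m) \sum_(l < m) F i j k l).
  rewrite pair_big; under eq_bigr do rewrite pair_big.
  by rewrite exchange_big [RHS]pair_big; apply: eq_bigr => -[i j] _; rewrite pair_big.
apply: eq_bigr => i _; apply: eq_bigr => j _.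
rewrite (lin_sum (linX i j)) ip_suml exchange_big; apply: eq_bigr => k _.
rewrite ip_sumr; apply: eq_bigr => l _.
by rewrite (linZ (linX i j)) ipZl ipZr /F; ring.
Qed.

Lemma congr_hermitian n m (alpha : 'M[R[i]]_(n, m)) (X : opmx H n) :
  Defs.hermitian Hs X -> Defs.hermitian Hs (congr_mx alpha X).
Proof.
move=> hermX k l x y; rewrite /congr_mx ip_suml ip_sumr.
under eq_bigr do rewrite ip_suml.
under [RHS]eq_bigr do rewrite ip_sumr.
rewrite [RHS]exchange_big /=; apply: eq_bigr => i _; apply: eq_bigr => j _.
by rewrite ipZl ipZr hermX; congr (_ * _); rewrite rmorphM /= conjcK mulrC.
Qed.

Lemma mx_form_le n (X : opmx H n) (K : R) w : 0 <= K -> Defs.hermitian Hs X ->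
  (forall i j x, ip (X i j x) (X i j x) <= K%:C * ip x x) ->
  mx_form X w <= ((K + 1) *+ n)%:C * \sum_(i < n) ip (w i) (w i).
Proof.
move=> K_ge0 hermX boundX; set N := \sum_(i < n) ip (w i) (w i).
have N_ge0 : 0 <= N by apply: sumr_ge0 => i _; apply: ip_ge0.
suff twice : mx_form X w *+ 2 <= ((K + 1) *+ n)%:C * N.
  rewrite -(ler_pMn2r (_ : 0 < 2)%N) //; apply: le_trans twice _.
  by rewrite mulr2n lerDl mulr_ge0 // ler0c mulrn_wge0 // addr_ge0.
(* The form is real, so twice it is a sum of terms <a, b> + <b, a> <= |a|^2 + |b|^2. *)
rewrite mulr2n -[X in _ + X](mx_form_conj w hermX) /mx_form rmorph_sum -big_split /=.
apply: (le_trans (y := \sum_(i < n) \sum_(j < n) (K%:C * ip (w j) (w j) + ip (w i) (w i)))).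
  apply: ler_sum => i _; rewrite rmorph_sum -big_split /=; apply: ler_sum => j _.
  by rewrite -ip_conj; apply: le_trans (ip_cross_le Hs _ _) _; rewrite lerD2r boundX.
under eq_bigr do rewrite big_split /= -mulr_sumr sumr_const card_ord.
rewrite big_split /= sumr_const card_ord sumrMnl -/N.
by rewrite rmorphMn rmorphD rmorph1 mulrnAl mulrDl mul1r mulrnDl.
Qed.

End MatrixForm.

Section OperatorSystem.
Variables (R : realType) (H : lmodType R[i]) (Hs : hilbert H).
Variables (V : op H -> Prop) (hV : operator_system Hs V).
Local Notation ip := (ip Hs).

Lemma opsys0 : V (fun _ => 0).
Proof.
have [_ Vid _ Vscale _] := hV.
have -> : (fun _ : H => 0) = op_scale 0 (@op_id R H).
  by apply: functional_extensionality => x; rewrite /op_scale scale0r.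
exact: Vscale.
Qed.

Lemma opsys_sum (I : Type) (r : seq I) (F : I -> op H) :
  (forall i, V (F i)) -> V (fun x => \sum_(i <- r) F i x).
Proof.
have [_ _ Vadd _ _] := hV; move=> VF; elim: r => [|a r IH].
  have -> : (fun x => \sum_(i <- [::]) F i x) = (fun _ => 0).
    by apply: functional_extensionality => x; rewrite big_nil.
  exact: opsys0.
have -> : (fun x => \sum_(i <- a :: r) F i x) = op_add (F a) (fun x => \sum_(i <- r) F i x).
  by apply: functional_extensionality => x; rewrite big_cons.
exact: Vadd.
Qed.

Lemma opsys_ampl (q : op H) n i j : V q -> V (@ampl _ _ q n i j).
Proof. by move=> Vq; rewrite /ampl; case: eqP => _ //; exact: opsys0. Qed.

Lemma opsys_congr n m (alpha : 'M[R[i]]_(n, m)) (X : opmx H n) :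
  in_Mn V X -> in_Mn V (congr_mx alpha X).
Proof.
have [_ _ _ Vscale _] := hV; move=> VX k l.
by do 2!apply: opsys_sum => ?; exact: Vscale.
Qed.

Lemma opsys_mx_bounded n (X : opmx H n) : in_Mn V X ->
  exists2 K : R, 0 <= K & forall i j x, ip (X i j x) (X i j x) <= K%:C * ip x x.
Proof.
have [BH _ _ _ _] := hV; move=> VX.
pose P (ij : 'I_n * 'I_n) (M : R) :=
  forall x, ip (X ij.1 ij.2 x) (X ij.1 ij.2 x) <= M%:C * ip x x.
have P_mono ij M M' : P ij M -> M <= M' -> P ij M'.
  move=> boundM le_MM' x; apply: le_trans (boundM x) _.
  by rewrite ler_wpM2r ?ip_ge0 // lecR.
have P_ex ij : exists M, P ij M by case: (BH _ (VX ij.1 ij.2)).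
have [K K_ge0 boundK] := uniform_bound P_mono P_ex.
by exists K => // i j; apply: (boundK (i, j)).
Qed.

End OperatorSystem.

Section CompressedCone.
Variables (R : realType) (H : lmodType R[i]) (Hs : hilbert H).
Variables (V : op H -> Prop) (p : op H).
Hypotheses (hV : operator_system Hs V) (lin_p : is_linear_op p) (adj_p : is_adj Hs p p).
Local Notation ip := (ip Hs).

Lemma CpP n (X : opmx H n) : Cp Hs V p X <->
  [/\ in_Mn V X, Defs.hermitian Hs X & forall v, 0 <= mx_form Hs X (p \o v)].
Proof.
by split=> -[VX hX posX]; split=> //; apply/(mx_pos_compress _ adj_p).
Qed.

Lemma Cp_add n (X Y : opmx H n) : Cp Hs V p X -> Cp Hs V p Y -> Cp Hs V p (mx_add X Y).
Proof.
have [_ _ Vadd _ _] := hV; move=> /CpP[VX hX posX] /CpP[VY hY posY]; apply/CpP; split.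
- by move=> i j; apply: Vadd.
- by move=> i j; apply: adj_add.
- by move=> v; rewrite mx_form_add addr_ge0.
Qed.

Lemma Cp_scale n (t : R) (X : opmx H n) :
  0 <= t -> Cp Hs V p X -> Cp Hs V p (mx_scale t%:C X).
Proof.
have [_ _ _ Vscale _] := hV; move=> t_ge0 /CpP[VX hX posX]; apply/CpP; split.
- by move=> i j; apply: Vscale.
- by move=> i j; apply: adj_scale; rewrite ?conjc_real.
- by move=> v; rewrite mx_form_scale mulr_ge0 ?ler0c.
Qed.

Lemma Cp_congr n m (alpha : 'M[R[i]]_(n, m)) (X : opmx H n) :
  Cp Hs V p X -> Cp Hs V p (congr_mx alpha X).
Proof.
have [BH _ _ _ _] := hV; move=> /CpP[VX hX posX]; apply/CpP; split.
- exact: (opsys_congr hV alpha VX).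
- exact: congr_hermitian.
move=> v; rewrite mx_form_congr => [|i j]; last by case: (BH _ (VX i j)).
have -> : (fun i => \sum_(l < m) alpha i l *: (p \o v) l) =
          p \o (fun i => \sum_(l < m) alpha i l *: v l).
  apply: functional_extensionality => i /=; rewrite (lin_sum lin_p).
  by apply: eq_bigr => l _; rewrite (linZ lin_p).
exact: posX.
Qed.

Lemma Cp_matrix_ordering : matrix_ordering Hs V (Cp Hs V p).
Proof.
split=> [n X /CpP[] // | n | n m alpha X]; last exact: Cp_congr.
by split=> [X Y | t X]; [exact: Cp_add | exact: Cp_scale].
Qed.

Section OrderUnit.
Variable q : op H.
Hypotheses (idem_p : forall x, p (p x) = p x) (Vq : V q) (le_pq : op_le Hs p q).

Lemma ip_proj_le x : ip (p x) (p x) <= ip (q (p x)) (p x).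
Proof.
by have := le_pq (p x); rewrite /op_add /op_scale ipDl ipZl mulN1r subr_ge0 idem_p.
Qed.

Lemma adj_q : is_adj Hs q q.
Proof.
have [BH _ _ _ _] := hV; have [lin_q _] := BH _ Vq.
have adj_qp := op_pos_adj (op_add_linear lin_q (op_scale_linear (-1) lin_p)) le_pq.
have qE z : q z = op_add q (op_scale (-1) p) z + p z.
  by rewrite /op_add /op_scale scaleN1r addrNK.
by move=> x y; rewrite qE ipDl adj_qp adj_p -ipDr -qE.
Qed.

Lemma mx_form_ampl_ge n (v : 'I_n -> H) :
  \sum_(i < n) ip (p (v i)) (p (v i)) <= mx_form Hs (@ampl _ _ q n) (p \o v).
Proof. by rewrite mx_form_ampl; apply: ler_sum => i _; apply: ip_proj_le. Qed.

Lemma Cp_order_unit n (X : opmx H n) : in_Mn V X -> Defs.hermitian Hs X ->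
  exists2 r : R, 0 < r &
    Cp Hs V p (mx_add (mx_scale r%:C (@ampl _ _ q n)) (mx_scale (-1) X)).
Proof.
move=> VX hX; have [K K_ge0 boundX] := opsys_mx_bounded hV VX.
have K1_gt0 : 0 < K + 1 by rewrite ltr_wpDl.
exists ((K + 1) *+ n.+1); first by rewrite pmulrn_lgt0.
have [_ _ Vadd Vscale _] := hV; apply/CpP; split.
- by move=> i j; apply: Vadd; apply: Vscale; [exact: (opsys_ampl hV _ _ Vq) | exact: VX].
- move=> i j; apply: adj_add; apply: adj_scale; rewrite ?conjc_real ?rmorphN1 //.
  exact: adj_ampl adj_q.
move=> v; rewrite mx_form_add !mx_form_scale mulN1r subr_ge0.
set N := \sum_(i < n) ip (p (v i)) (p (v i)).
have N_ge0 : 0 <= N by apply: sumr_ge0 => i _; apply: ip_ge0.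
apply: le_trans (mx_form_le (p \o v) K_ge0 hX boundX) _.
apply: (le_trans (y := ((K + 1) *+ n.+1)%:C * N)).
  by rewrite ler_wpM2r // lecR mulrS lerDr ltW.
by rewrite ler_wpM2l ?mx_form_ampl_ge // ler0c pmulrn_lge0 ?ltW.
Qed.

Lemma Cp_archimedean n (X : opmx H n) : in_Mn V X -> Defs.hermitian Hs X ->
  (forall eps : R, 0 < eps -> Cp Hs V p (mx_add X (mx_scale eps%:C (@ampl _ _ q n)))) ->
  Cp Hs V p X.
Proof.
move=> VX hX posXe; apply/CpP; split=> // v.
apply: (ge0_of_forall_addZ (b := mx_form Hs (@ampl _ _ q n) (p \o v))).
  by apply: le_trans (mx_form_ampl_ge v); apply: sumr_ge0 => i _; apply: ip_ge0.
by move=> e /posXe /CpP[_ _ /(_ v)]; rewrite mx_form_add mx_form_scale.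
Qed.

End OrderUnit.
End CompressedCone.

Theorem proposition3p1 (R : realType) (H : lmodType R[i]) (Hs : hilbert H)
    (V : op H -> Prop) (p : op H) :
  operator_system Hs V -> V p -> projection Hs p ->
  matrix_ordering Hs V (Cp Hs V p) /\
  (forall q : op H, V q -> op_le Hs p q -> op_le Hs q (@op_id R H) ->
     archimedean_unit Hs V (Cp Hs V p) q).
Proof.
move=> hV _ [[lin_p _] idem_p adj_p]; split; first exact: Cp_matrix_ordering.
by move=> q Vq le_pq _; split; [exact: Cp_order_unit | exact: Cp_archimedean].
Qed.
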